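(* Let $R$ be an associative ring with identity and involution $*$, and let $a\in R^{\#}\cap R^{\dagger}$. Then $a\in R^{SEP}$ if and only if $a(a^{\#})^*a^{\dagger}$ and $a^{\dagger}a^2$ are left $a^{\dagger}a^2$-equivalent, i.e. $a^{\dagger}a^2\,a(a^{\#})^*a^{\dagger}=a^{\dagger}a^2\,a^{\dagger}a^2$.
   Context: An involution on $R$ is a map $x\mapsto x^*$ with $(x^* )^*=x$, $(x+y)^*=x^*+y^*$, $(xy)^*=y^*x^*$. An element $a$ is Moore–Penrose invertible if there is $b$ with $aba=a$, $bab=b$, $(ab)^*=ab$, $(ba)^*=ba$; such $b$ is unique, denoted $a^{\dagger}$, and $R^{\dagger}$ is the set of such $a$. An element $a$ is group invertible if there is $b$ with $aba=a$, $bab=b$, $ab=ba$; such $b$ is unique, denoted $a^{\#}$, and $R^{\#}$ is the set of such $a$. For $a\in R^{\#}\cap R^{\dagger}$, $a$ is SEP if $a^*=a^{\dagger}=a^{\#}$; $R^{SEP}$ denotes the set of SEP elements. For $x,b,c\in R$, $b$ and $c$ are left $x$-equivalent if $xb=xc$. *)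

From mathcomp Require Import all_boot all_algebra.
Set Implicit Arguments. Unset Strict Implicit. Unset Printing Implicit Defensive.
Import GRing.Theory.
Local Open Scope ring_scope.

Definition involution (R : pzRingType) (star : R -> R) : Prop :=
  (forall x, star (star x) = x) /\
  (forall x y, star (x + y) = star x + star y) /\
  (forall x y, star (x * y) = star y * star x).

Definition is_mp_inverse (R : pzRingType) (star : R -> R) (a b : R) : Prop :=
  a * b * a = a /\ b * a * b = b /\ star (a * b) = a * b /\ star (b * a) = b * a.

Definition is_group_inverse (R : pzRingType) (a b : R) : Prop :=
  a * b * a = a /\ b * a * b = b /\ a * b = b * a.

Definition is_SEP (R : pzRingType) (star : R -> R) (a adag asharp : R) : Prop :=
  star a = adag /\ star a = asharp.

Definition left_equiv (R : pzRingType) (x b c : R) : Prop := x * b = x * c.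

From mathcomp Require Import all_boot all_algebra.
Local Open Scope ring_scope.
Import GRing.Theory.
Set Implicit Arguments. Unset Strict Implicit. Unset Printing Implicit Defensive.

(* Write d = a^+ and g = a#.  As a d a = a, the right-hand side d a^2 d a^2 is
   d a^2 a, and d a^2 can be cancelled in front of elements of aR (multiply by
   g a on the left); so the condition says exactly a g^* d = a.  Conversely,
   a g^* d = a gives a = a g^* d a d = a^2 d, hence g a = g a^2 d = a d is
   Hermitian, which forces g = d; then a d^* d = a yields d^* d = d a, and
   d = a^* d^* d = a^* d a = a^*. *)

Section GroupInverse.

Variables (R : pzRingType) (a g : R).
Hypothesis ga : is_group_inverse a g.

Lemma group_inv_mul_sqr : g * a * a = a.
Proof. by case: ga => aga [_ ag_ga]; rewrite -ag_ga. Qed.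

Lemma sqr_mul_inj x y : a * (a * x) = a * (a * y) -> a * x = a * y.
Proof. by move=> /(congr1 (GRing.mul g)); rewrite !mulrA group_inv_mul_sqr. Qed.

Lemma left_equiv_sqr_iff d b : a * d * a = a ->
  left_equiv (d * a ^+ 2) (a * b) (d * a ^+ 2) <-> a * b = a.
Proof.
move=> ada; rewrite /left_equiv expr2.
have -> : d * (a * a) * (d * (a * a)) = d * (a * a) * a.
  by rewrite -!mulrA (mulrA a d) (mulrA (a * d)) ada.
split=> [|-> //].
move/(congr1 (GRing.mul a)).
rewrite -!mulrA !(mulrA a d) !(mulrA (a * d)) ada => /sqr_mul_inj a_ab.
by rewrite -[RHS]mulr1; apply: sqr_mul_inj; rewrite mulr1 a_ab.
Qed.

End GroupInverse.

Section MoorePenroseInverse.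

Variables (R : pzRingType) (star : R -> R) (a d : R).
Hypothesis starK : involutive star.
Hypothesis starM : forall x y, star (x * y) = star y * star x.
Hypothesis mp : is_mp_inverse star a d.

Lemma star_eq_mp_inv : a * d = d * a -> a * star d * d = a -> star a = d.
Proof.
case: mp => ada [dad [ad_herm da_herm]] ad_da key.
have sd : star d = d * a * star d.
  by rewrite -{1}dad -[d * a * d]mulrA starM ad_herm ad_da.
have sdd : star d * d = d * a by rewrite {1}sd -!mulrA (mulrA a) key.
by rewrite -{1}dad -{1}da_herm starM -mulrA sdd -ad_da -{1}ad_herm -starM ada.
Qed.

Variable g : R.
Hypothesis ga : is_group_inverse a g.

Lemma group_inv_eq_mp_inv : g * a = a * d -> g = d.
Proof.
case: mp => ada [dad [ad_herm da_herm]]; case: ga => aga [gag ag_ga] ga_ad.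
have ga_herm : star (g * a) = g * a by rewrite ga_ad ad_herm.
have ga_da : g * a = d * a.
  have : g * a * (d * a) = g * a by rewrite -mulrA (mulrA a) ada.
  move/(congr1 star); rewrite starM ga_herm da_herm -mulrA (mulrA a g) aga.
  by move->.
by rewrite -gag ga_da -mulrA ag_ga ga_ad mulrA dad.
Qed.

Lemma is_SEP_iff : is_SEP star a d g <-> a * star g * d = a.
Proof.
case: (mp) => _ [dad _]; case: (ga) => aga [_ ag_ga].
split=> [[sa_d sa_g] | key].
  have -> : star g = a by rewrite -sa_g starK.
  by rewrite -sa_d sa_g -mulrA ag_ga mulrA aga.
have sqr_d : a * a * d = a by rewrite -{3}key -{2}dad !mulrA key.
have ga_ad : g * a = a * d.
  by rewrite -{1}sqr_d !mulrA (group_inv_mul_sqr ga).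
have g_d := group_inv_eq_mp_inv ga_ad.
have ad_da : a * d = d * a by rewrite -ga_ad g_d.
have sa : star a = d by apply: star_eq_mp_inv ad_da _; rewrite -{1}g_d.
by split; rewrite sa ?g_d.
Qed.

End MoorePenroseInverse.

Theorem theorem5p3 (R : pzRingType) (star : R -> R) (a adag asharp : R) :
  involution star ->
  is_mp_inverse star a adag ->
  is_group_inverse a asharp ->
  is_SEP star a adag asharp <->
  left_equiv (adag * a ^+ 2) (a * star asharp * adag) (adag * a ^+ 2).
Proof.
move=> [starK [_ starM]] mp ga.
have [ada _] := mp.
apply: iff_trans (is_SEP_iff starK starM mp ga) _.
rewrite -(mulrA a (star asharp)); exact: iff_sym (left_equiv_sqr_iff ga _ ada).
Qed.
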